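(* Let $p$ be any of the following patterns, or any pattern in the same symmetry class as one of them: $(123,\{0\},\{0,1,2\})$, $(123,\{0\},\{0,1,3\})$, $(123,\{0\},\{0,2,3\})$, $(123,\{0\},\{1,2,3\})$, $(123,\{1\},\{0,1,2\})$, $(123,\{1\},\{0,1,3\})$, $(123,\{1\},\{0,2,3\})$, $(123,\{1\},\{1,2,3\})$, $(132,\{0\},\{0,1,2\})$, $(132,\{0\},\{0,1,3\})$, $(132,\{0\},\{0,2,3\})$, $(132,\{0\},\{1,2,3\})$, $(132,\{1\},\{0,1,2\})$, $(132,\{1\},\{0,1,3\})$, $(132,\{1\},\{0,2,3\})$, $(132,\{1\},\{1,2,3\})$, $(132,\{2\},\{0,1,2\})$, $(132,\{2\},\{0,1,3\})$, $(132,\{2\},\{0,2,3\})$, $(132,\{2\},\{1,2,3\})$, $(132,\{0,1,2\},\{3\})$, $(132,\{3\},\{0,1,3\})$, $(132,\{3\},\{0,2,3\})$, $(132,\{3\},\{1,2,3\})$. Then for all $n\ge3$, $a_n(p)=n!-\frac{(n-1)!}{2}$.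
   Context: For $n\ge1$, $\mathcal S_n$ is the set of permutations $\pi=\pi_1\cdots\pi_n$ of $[n]$. A bi-vincular pattern of length $k$ is a triple $p=(\sigma,X,Y)$ with $\sigma\in\mathcal S_k$ and $X,Y\subseteq\{0,1,\dots,k\}$. A permutation $\pi\in\mathcal S_n$ contains $p$ if there are indices $1\le i_1<\dots<i_k\le n$ such that $(\pi_{i_1},\dots,\pi_{i_k})$ is order-isomorphic to $\sigma$ and, letting $j_1<\dots<j_k$ be the values $\pi_{i_1},\dots,\pi_{i_k}$ sorted increasingly and setting $i_0=j_0=0$, $i_{k+1}=j_{k+1}=n+1$, one has $i_{x+1}=i_x+1$ for all $x\in X$ and $j_{y+1}=j_y+1$ for all $y\in Y$. Otherwise $\pi$ avoids $p$; $a_n(p)$ is the number of $\pi\in\mathcal S_n$ avoiding $p$. Symmetries: $p^{i}=(\sigma^{-1},Y,X)$, $p^{r}=(\sigma^{r},\{k-x:x\in X\},Y)$, $p^{c}=(\sigma^{c},X,\{k-y:y\in Y\})$ with $\sigma^r_j=\sigma_{k+1-j}$, $\sigma^c_j=k+1-\sigma_j$; the symmetry class of $p$ consists of all patterns obtained from $p$ by finitely many applications of these maps. *)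

From HB Require Import structures.
From mathcomp Require Import all_boot all_order all_algebra all_fingroup.
Set Implicit Arguments.
Unset Strict Implicit.
Unset Printing Implicit Defensive.

(* Bi-vincular patterns of length k: (sigma, X, Y), sigma in S_k,
   X, Y subsets of {0,...,k} (represented as {set 'I_k.+1}).
   Permutations of [n] are 'S_n acting on 'I_n = {0,...,n-1}; position i
   (0-based) corresponds to position i+1 in the paper, value v to v+1. *)
Record bvpat (k : nat) := BVPat {
  bv_sigma : 'S_k;
  bv_X : {set 'I_k.+1};
  bv_Y : {set 'I_k.+1}
}.

(* Extended sequence: s = [i_1; ...; i_k] (1-based), ext n s x = i_x with
   i_0 = 0 and i_{k+1} = n+1. *)
Definition ext (n : nat) (s : seq nat) (x : nat) : nat := nth n.+1 (0 :: s) x.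

Definition contains (n k : nat) (pi : 'S_n) (p : bvpat k) : bool :=
  [exists I : {ffun 'I_k -> 'I_n},
    let ps := [seq (I t : nat).+1 | t <- enum 'I_k] in
    let vs := sort leq [seq (pi (I t) : nat).+1 | t <- enum 'I_k] in
    [&& [forall s : 'I_k, forall t : 'I_k, (s < t) ==> (I s < I t)],
        [forall s : 'I_k, forall t : 'I_k,
           (pi (I s) < pi (I t)) == (bv_sigma p s < bv_sigma p t)],
        [forall x : 'I_k.+1, (x \in bv_X p) ==> (ext n ps x.+1 == (ext n ps x).+1)] &
        [forall y : 'I_k.+1, (y \in bv_Y p) ==> (ext n vs y.+1 == (ext n vs y).+1)]]].

Definition avoid_count (n k : nat) (p : bvpat k) : nat :=
  #|[set pi : 'S_n | ~~ contains pi p]|.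

Definition rev_perm (k : nat) : 'S_k := perm (@rev_ord_inj k).

Definition pat_inv k (p : bvpat k) : bvpat k :=
  BVPat (bv_sigma p)^-1 (bv_Y p) (bv_X p).
(* sigma^r_j = sigma_{k+1-j};  X |-> {k - x} *)
Definition pat_rev k (p : bvpat k) : bvpat k :=
  BVPat (rev_perm k * bv_sigma p)%g [set rev_ord x | x in bv_X p] (bv_Y p).
(* sigma^c_j = k+1-sigma_j;  Y |-> {k - y} *)
Definition pat_comp k (p : bvpat k) : bvpat k :=
  BVPat (bv_sigma p * rev_perm k)%g (bv_X p) [set rev_ord y | y in bv_Y p].

Inductive sym_class k (p : bvpat k) : bvpat k -> Prop :=
| sym_refl : sym_class p p
| sym_inv q : sym_class p q -> sym_class p (pat_inv q)
| sym_rev q : sym_class p q -> sym_class p (pat_rev q)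
| sym_comp q : sym_class p q -> sym_class p (pat_comp q).

Definition s3 (l : seq nat) : {set 'I_4} := [set x : 'I_4 | val x \in l].
Definition p123 : 'S_3 := 1%g.
Definition p132 : 'S_3 := tperm (inord 1) (inord 2).

Definition base_patterns : seq (bvpat 3) := [::
  BVPat p123 (s3 [::0]) (s3 [::0;1;2]);
  BVPat p123 (s3 [::0]) (s3 [::0;1;3]);
  BVPat p123 (s3 [::0]) (s3 [::0;2;3]);
  BVPat p123 (s3 [::0]) (s3 [::1;2;3]);
  BVPat p123 (s3 [::1]) (s3 [::0;1;2]);
  BVPat p123 (s3 [::1]) (s3 [::0;1;3]);
  BVPat p123 (s3 [::1]) (s3 [::0;2;3]);
  BVPat p123 (s3 [::1]) (s3 [::1;2;3]);
  BVPat p132 (s3 [::0]) (s3 [::0;1;2]);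
  BVPat p132 (s3 [::0]) (s3 [::0;1;3]);
  BVPat p132 (s3 [::0]) (s3 [::0;2;3]);
  BVPat p132 (s3 [::0]) (s3 [::1;2;3]);
  BVPat p132 (s3 [::1]) (s3 [::0;1;2]);
  BVPat p132 (s3 [::1]) (s3 [::0;1;3]);
  BVPat p132 (s3 [::1]) (s3 [::0;2;3]);
  BVPat p132 (s3 [::1]) (s3 [::1;2;3]);
  BVPat p132 (s3 [::2]) (s3 [::0;1;2]);
  BVPat p132 (s3 [::2]) (s3 [::0;1;3]);
  BVPat p132 (s3 [::2]) (s3 [::0;2;3]);
  BVPat p132 (s3 [::2]) (s3 [::1;2;3]);
  BVPat p132 (s3 [::0;1;2]) (s3 [::3]);
  BVPat p132 (s3 [::3]) (s3 [::0;1;3]);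
  BVPat p132 (s3 [::3]) (s3 [::0;2;3]);
  BVPat p132 (s3 [::3]) (s3 [::1;2;3])
].

Definition listed (p : bvpat 3) : Prop :=
  exists2 i, i < size base_patterns & p = nth (BVPat 1%g set0 set0) base_patterns i.

(* Requiring three of the four value adjacencies of a length-3 pattern (between the
   consecutive terms of 0 < v1 < v2 < v3 < n+1) pins the values of every occurrence:
   if only the y-th one is missing, the occurrence uses the values 1..y and the
   3-y largest values of [n].
   Containing such a pattern is therefore an event about the positions of three
   fixed entries: they must appear in the order prescribed by sigma and satisfy the
   single positional adjacency of X.  An involution on S_n (a transposition, or a
   transposition composed with reversal) exchanges this event with its mirror,
   while the union of the two has probability 1/n; hence (n-1)!/2 permutations
   contain the pattern.  The remaining listed pattern (132, {0,1,2}, {3}) is the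
   inverse of such a pattern, and a_n is constant on symmetry classes. *)

From mathcomp Require Import all_boot all_order all_algebra all_fingroup.
From mathcomp Require Import zify.
Import GRing.Theory.

Set Implicit Arguments.
Unset Strict Implicit.
Unset Printing Implicit Defensive.

Definition i0 : 'I_3 := @Ordinal 3 0 isT.
Definition i1 : 'I_3 := @Ordinal 3 1 isT.
Definition i2 : 'I_3 := @Ordinal 3 2 isT.

Lemma ord3P (t : 'I_3) : t = i0 \/ t = i1 \/ t = i2.
Proof.
by case: t => [[|[|[|//]]] ?]; [left | right; left | right; right]; apply: val_inj.
Qed.

Lemma enum_ord3 : enum 'I_3 = [:: i0; i1; i2].
Proof. by apply: (inj_map val_inj); rewrite val_enum_ord. Qed.

(* Adjacency number [x] of the 0-based triple [a < b < c] in [0, n), read as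
   i_(x+1) = i_x + 1 with the sentinels i_0 = -1 and i_4 = n. *)
Definition adjv (n a b c x : nat) : bool :=
  match x with 0 => a == 0 | 1 => b == a.+1 | 2 => c == b.+1 | _ => c.+1 == n end.

Definition adj n (f : 'I_3 -> 'I_n) (x : 'I_4) : bool := adjv n (f i0) (f i1) (f i2) x.

Definition incr3 n (f : 'I_3 -> 'I_n) : bool := (f i0 < f i1) && (f i1 < f i2).

Definition occurrence n (pi : 'S_n) (p : bvpat 3) (P V : 'I_3 -> 'I_n) : Prop :=
  [/\ incr3 P, incr3 V, forall t, pi (P t) = V (bv_sigma p t),
      {in bv_X p, forall x, adj P x} & {in bv_Y p, forall y, adj V y}].

Lemma incr3_ltn n (f : 'I_3 -> 'I_n) : incr3 f -> forall s t : 'I_3, (s < t) = (f s < f t).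
Proof.
move=> /andP[f01 f12] s t.
by case: (ord3P s) => [->|[->|->]]; case: (ord3P t) => [->|[->|->]] /=; lia.
Qed.

Lemma incr3_inj n (f : 'I_3 -> 'I_n) : incr3 f -> injective f.
Proof.
move=> /incr3_ltn f_mono s t fst.
by case: (ltngtP s t) => [|| /val_inj //]; rewrite f_mono fst ltnn.
Qed.

Lemma ext_adj n (f : 'I_3 -> 'I_n) (x : 'I_4) :
  let s := [seq (f t : nat).+1 | t <- enum 'I_3] in
  (ext n s x.+1 == (ext n s x).+1) = adj f x.
Proof. by rewrite enum_ord3 /ext /adj; case: x => [[|[|[|[|]]]] ?] //=; rewrite eqSS. Qed.

Lemma perm_map_enum (T : finType) (s : {perm T}) : perm_eq (map s (enum T)) (enum T).
Proof.
apply: uniq_perm; rewrite ?(map_inj_uniq perm_inj) ?enum_uniq // => x.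
by rewrite mem_enum; apply/mapP; exists (s^-1 x)%g; rewrite ?mem_enum ?permKV.
Qed.

Lemma sort_incr3 n (s : 'S_3) (V : 'I_3 -> 'I_n) : incr3 V ->
  sort leq [seq (V (s t) : nat).+1 | t <- enum 'I_3] =
  [seq (V t : nat).+1 | t <- enum 'I_3].
Proof.
move=> V_incr; apply: (sorted_eq leq_trans anti_leq).
- exact: (sort_sorted leq_total).
- by move: V_incr; rewrite /incr3 enum_ord3 /= => /andP[]; lia.
rewrite perm_sort (map_comp (fun t => (V t : nat).+1) s).
exact/perm_map/perm_map_enum.
Qed.

Lemma containsP n (pi : 'S_n) (p : bvpat 3) :
  reflect (exists P V, occurrence pi p P V) (contains pi p).
Proof.
set s := bv_sigma p; apply: (iffP existsP) => [[I /and4P[I_mono I_iso IX IY]] | [P [V]]].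
- have pi_iso a b : (pi (I a) < pi (I b)) = (s a < s b).
    by move/forallP: I_iso => /(_ a) /forallP /(_ b) /eqP.
  have I_incr : incr3 I.
    by move/forallP: I_mono => I_mono; rewrite /incr3 !(implyP (forallP (I_mono _) _)).
  pose V t := pi (I (s^-1 t)%g).
  have V_incr : incr3 V by rewrite /incr3 /V !pi_iso !permKV.
  have VsE t : V (s t) = pi (I t) by rewrite /V permK.
  exists I, V; split=> // [x xX | y yY].
  + by rewrite -ext_adj; move/forallP: IX => /(_ x) /implyP; apply.
  + rewrite -ext_adj -(sort_incr3 s V_incr).
    have -> : [seq (V (s t) : nat).+1 | t <- enum 'I_3] =
              [seq (pi (I t) : nat).+1 | t <- enum 'I_3] by apply: eq_map => t; rewrite VsE.
    by move/forallP: IY => /(_ y) /implyP; apply.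
- case=> P_incr V_incr piPV PX VY; exists (finfun P).
  have piPE t : pi (finfun P t) = V (s t) by rewrite ffunE.
  have -> : [seq (finfun P t : nat).+1 | t <- enum 'I_3] =
            [seq (P t : nat).+1 | t <- enum 'I_3] by apply: eq_map => t; rewrite ffunE.
  have -> : [seq (pi (finfun P t) : nat).+1 | t <- enum 'I_3] =
            [seq (V (s t) : nat).+1 | t <- enum 'I_3] by apply: eq_map => t; rewrite piPE.
  rewrite sort_incr3 //.
  apply/and4P; split; apply/forallP => a; try apply/forallP => b.
  + by apply/implyP; rewrite !ffunE -(incr3_ltn P_incr).
  + by rewrite !piPE -(incr3_ltn V_incr).
  + by apply/implyP => aX; rewrite ext_adj PX.
  + by apply/implyP => aY; rewrite ext_adj VY.
Qed.

Lemma occurrence_inv n (pi : 'S_n) (p : bvpat 3) (P V : 'I_3 -> 'I_n) :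
  occurrence pi p P V -> occurrence pi^-1 (pat_inv p) V P.
Proof.
case=> P_incr V_incr piPV PX VY; split=> //= t.
by rewrite -(permKV (bv_sigma p) t) -piPV !permK.
Qed.

Lemma pat_invK : involutive (@pat_inv 3).
Proof. by case=> s X Y; rewrite /pat_inv /= invgK. Qed.

Lemma contains_inv n (pi : 'S_n) (p : bvpat 3) : contains pi^-1 (pat_inv p) = contains pi p.
Proof.
apply/containsP/containsP => [[P [V /occurrence_inv]] | [P [V /occurrence_inv]]].
- by rewrite invgK pat_invK; exists V, P.
- by exists V, P.
Qed.

Lemma rev_permE k (x : 'I_k) : rev_perm k x = rev_ord x.
Proof. by rewrite permE. Qed.

Lemma rev_permK k : (rev_perm k * rev_perm k = 1)%g.
Proof. by apply/permP => x; rewrite permM !rev_permE rev_ordK perm1. Qed.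

Definition rev3 n (f : 'I_3 -> 'I_n) (t : 'I_3) : 'I_n := rev_ord (f (rev_ord t)).

Lemma rev3E n (f : 'I_3 -> 'I_n) :
  [/\ rev3 f i0 = rev_ord (f i2), rev3 f i1 = rev_ord (f i1) & rev3 f i2 = rev_ord (f i0)].
Proof. by split; rewrite /rev3; congr (rev_ord (f _)); apply: val_inj. Qed.

Lemma incr3_rev n (f : 'I_3 -> 'I_n) : incr3 f -> incr3 (rev3 f).
Proof.
rewrite /incr3; have [-> -> ->] := rev3E f; rewrite /=.
by have := ltn_ord (f i0); have := ltn_ord (f i1); have := ltn_ord (f i2); lia.
Qed.

Lemma adj_rev n (f : 'I_3 -> 'I_n) (x : 'I_4) : adj (rev3 f) (rev_ord x) = adj f x.
Proof.
rewrite /adj; have [-> -> ->] := rev3E f; rewrite /=.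
have := ltn_ord (f i0); have := ltn_ord (f i1); have := ltn_ord (f i2).
by case: x => [[|[|[|[|]]]] ?] //= *; apply/idP/idP; lia.
Qed.

Lemma occurrence_rev n (pi : 'S_n) (p : bvpat 3) (P V : 'I_3 -> 'I_n) :
  occurrence pi p P V -> occurrence (rev_perm n * pi) (pat_rev p) (rev3 P) V.
Proof.
case=> P_incr V_incr piPV PX VY; split=> //=.
- exact: incr3_rev.
- by move=> t; rewrite !permM !rev_permE rev_ordK piPV.
- by move=> _ /imsetP[x xX ->]; rewrite adj_rev PX.
Qed.

Lemma imset_rev_ordK k (A : {set 'I_k}) :
  [set rev_ord x | x in [set rev_ord y | y in A]] = A.
Proof. by rewrite -imset_comp (eq_imset _ (@rev_ordK k)) imset_id. Qed.

Lemma pat_revK : involutive (@pat_rev 3).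
Proof. by case=> s X Y; rewrite /pat_rev /= imset_rev_ordK mulgA rev_permK mul1g. Qed.

Lemma contains_rev n (pi : 'S_n) (p : bvpat 3) :
  contains (rev_perm n * pi) (pat_rev p) = contains pi p.
Proof.
apply/containsP/containsP => [[P [V /occurrence_rev]] | [P [V /occurrence_rev]]].
- by rewrite pat_revK mulgA rev_permK mul1g; exists (rev3 P), V.
- by exists (rev3 P), V.
Qed.

Lemma pat_compE (p : bvpat 3) : pat_comp p = pat_inv (pat_rev (pat_inv p)).
Proof.
case: p => s X Y; rewrite /pat_comp /pat_inv /pat_rev /= invMg invgK.
suff -> : ((rev_perm 3)^-1 = rev_perm 3)%g by [].
by apply/eqP; rewrite eq_invg_mul rev_permK.
Qed.

Lemma avoid_count_inv n (p : bvpat 3) : avoid_count n (pat_inv p) = avoid_count n p.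
Proof.
rewrite /avoid_count -[RHS](card_preimset _ (@invg_inj 'S_n)).
by apply: eq_card => pi; rewrite !inE -[in RHS]contains_inv invgK.
Qed.

Lemma avoid_count_rev n (p : bvpat 3) : avoid_count n (pat_rev p) = avoid_count n p.
Proof.
rewrite /avoid_count -[RHS](card_preimset _ (mulgI (rev_perm n))).
by apply: eq_card => pi; rewrite !inE -[in RHS]contains_rev mulgA rev_permK mul1g.
Qed.

Lemma avoid_count_sym_class n (p0 p : bvpat 3) :
  sym_class p0 p -> avoid_count n p = avoid_count n p0.
Proof.
elim=> // q _ <-; [exact: avoid_count_inv | exact: avoid_count_rev |].
by rewrite pat_compE avoid_count_inv avoid_count_rev avoid_count_inv.
Qed.

Lemma card_perm_fibre n (S : {set 'S_n}) (w : 'I_n) (F : {set 'I_n}) :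
  {in S, forall pi : 'S_n, pi w \notin F} ->
  (forall pi z z', pi \in S -> z \notin F -> z' \notin F -> (pi * tperm z z')%g \in S) ->
  forall z, z \notin F -> #|[set pi in S | pi w == z]| * #|~: F| = #|S|.
Proof.
move=> SF S_tperm.
have fibre_le z z' : z \notin F -> z' \notin F ->
    #|[set pi in S | pi w == z]| <= #|[set pi in S | pi w == z']|.
  move=> zF z'F; rewrite -(card_imset _ (mulIg (tperm z z'))).
  apply/subset_leq_card/subsetP => _ /imsetP[pi /setIdP[piS /eqP piw] ->].
  by rewrite inE S_tperm // permM piw tpermL eqxx.
move=> z zF; rewrite -[#|S|]sum1_card.
rewrite (partition_big (fun pi : 'S_n => pi w) (mem (~: F))) /=.
- rewrite mulnC -sum_nat_const; apply: eq_bigr => z'; rewrite inE => z'F.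
  by rewrite sum1dep_card; apply/eqP; rewrite eqn_leq !fibre_le.
- by move=> pi piS; rewrite inE SF.
Qed.

Lemma card_perm_fix n (u z : 'I_n) : #|[set pi : 'S_n | pi u == z]| = n.-1`!.
Proof.
have := card_perm_fibre (fun pi _ => negbT (in_set0 (pi u)))
  (fun pi z z' _ _ _ => in_setT (pi * tperm z z')%g) (negbT (in_set0 z)).
rewrite setC0 !cardsT card_ord card_Sn.
have -> : [set pi in [set: 'S_n] | pi u == z] = [set pi : 'S_n | pi u == z].
  by apply/setP => pi; rewrite !inE.
case: n u z => [[] //|m u z]; rewrite factS mulnC => /eqP.
by rewrite eqn_pmul2l // => /eqP.
Qed.

Lemma card_perm_fix2 n (u v i j : 'I_n) : u != v -> i != j ->
  #|[set pi : 'S_n | (pi u == i) && (pi v == j)]| = n.-2`!.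
Proof.
move=> uv ij; set S := [set pi : 'S_n | pi u == i].
have SF : {in S, forall pi : 'S_n, pi v \notin [set i]}.
  by move=> pi; rewrite !inE => /eqP <-; rewrite (inj_eq perm_inj) eq_sym.
have S_tperm pi z z' : pi \in S -> z \notin [set i] -> z' \notin [set i] ->
    (pi * tperm z z')%g \in S.
  by rewrite !inE permM => /eqP -> zi z'i; rewrite tpermD // eq_sym.
have := card_perm_fibre SF S_tperm (_ : j \notin [set i]).
rewrite inE eq_sym => /(_ ij); rewrite cardsC1 card_ord card_perm_fix.
have -> : [set pi in S | pi v == j] = [set pi : 'S_n | (pi u == i) && (pi v == j)].
  by apply/setP => pi; rewrite !inE.
clear S SF S_tperm; case: n u v i j uv ij => [[] //|[|m] u v i j uv ij].
  by move: u v uv => [[]] // ? [[]].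
by rewrite factS mulnC => /eqP; rewrite eqn_pmul2l // => /eqP.
Qed.

Lemma card_perm_succ n (u v : 'I_n) : u != v ->
  #|[set pi : 'S_n | (pi v : nat) == (pi u).+1]| = n.-1`!.
Proof.
move=> uv; rewrite -sum1_card (partition_big (fun pi : 'S_n => pi u) xpredT) //=.
rewrite (eq_bigr (fun i : 'I_n => if i.+1 < n then n.-2`! else 0)); last first.
  move=> i _; case: ifP => [iS | iN].
  - rewrite -(@card_perm_fix2 _ u v i (Ordinal iS) uv); last first.
      by rewrite -(inj_eq val_inj) /=; lia.
    rewrite sum1dep_card; apply: eq_card => pi; rewrite !inE andbC.
    by case: (pi u =P i) => //= ->; rewrite -(inj_eq val_inj).
  - rewrite big_pred0 // => pi; apply/negbTE; rewrite negb_and inE.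
    by case: (pi u =P i) => [->|_]; rewrite /= ?orbT ?orbF //; have := ltn_ord (pi v); lia.
case: n u v uv => [[] //|m u v uv].
rewrite big_ord_recr /= ltnn addn0 (eq_bigr (fun _ => m.-1`!)); last first.
  by move=> i _; rewrite ltnS ltn_ord.
rewrite sum_nat_const card_ord; case: m u v uv => [|m u v uv]; last by rewrite factS.
by move=> [[]] // ? [[]].
Qed.

Lemma card_predU_swap (T : finType) (A B : pred T) (f : T -> T) : injective f ->
  (forall x, A x -> B (f x)) -> (forall x, B x -> A (f x)) -> (forall x, ~~ (A x && B x)) ->
  #|[set x | A x || B x]| = 2 * #|[set x | A x]|.
Proof.
move=> f_inj fAB fBA AB0.
have card_le (C D : pred T) :
    (forall x, C x -> D (f x)) -> #|[set x | C x]| <= #|[set x | D x]|.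
  move=> fCD; rewrite -(card_imset _ f_inj).
  by apply/subset_leq_card/subsetP => _ /imsetP[x + ->]; rewrite !inE; exact: fCD.
have -> : [set x | A x || B x] = [set x | A x] :|: [set x | B x].
  by apply/setP => x; rewrite !inE.
rewrite cardsU (_ : _ :&: _ = set0) ?cards0 ?subn0; last first.
  by apply/setP => x; rewrite !inE; apply/negbTE.
have -> : #|[set x | B x]| = #|[set x | A x]| by apply/eqP; rewrite eqn_leq !card_le.
by rewrite addnn mul2n.
Qed.

Lemma perm_val_neq n (pi : 'S_n) (x y : 'I_n) : x != y -> (pi x : nat) != pi y.
Proof. by move=> xy; rewrite (inj_eq val_inj) (inj_eq perm_inj). Qed.

Section ThreeDistinctPoints.
Variables (n : nat) (u v w : 'I_n).
Hypotheses (uv : u != v) (vw : v != w) (uw : u != w).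

Lemma card_fix_ltn z : 2 * #|[set pi : 'S_n | (pi u == z) && (pi v < pi w)]| = n.-1`!.
Proof.
pose B (pi : 'S_n) := (pi u == z) && (pi w < pi v).
rewrite -(card_perm_fix u z) -(@card_predU_swap _ _ B _ (mulgI (tperm v w))) => [|pi|pi|pi];
  rewrite /B ?permM ?tpermL ?tpermR ?tpermD 1?eq_sym //.
- apply: eq_card => pi; rewrite !inE.
  by case: (pi u =P z) => //= _; have := perm_val_neq pi vw; lia.
- by apply/negP; lia.
Qed.

(* [pi |-> tperm u v * pi * rev_perm n] keeps [pi u, pi v] adjacent and moves
   [pi w] to the other side of them. *)
Lemma card_succ_halves :
  2 * #|[set pi : 'S_n | ((pi v : nat) == (pi u).+1) && (pi v < pi w)]| = n.-1`! /\
  2 * #|[set pi : 'S_n | ((pi v : nat) == (pi u).+1) && (pi w < pi u)]| = n.-1`!.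
Proof.
pose f (pi : 'S_n) := (tperm u v * pi * rev_perm n)%g.
have f_inj : injective f by move=> x y /mulIg /mulgI.
have fE pi x : (f pi x : nat) = n - (pi (tperm u v x)).+1 by rewrite !permM rev_permE.
pose A (pi : 'S_n) := ((pi v : nat) == (pi u).+1) && (pi v < pi w).
pose B (pi : 'S_n) := ((pi v : nat) == (pi u).+1) && (pi w < pi u).
have bounds (pi : 'S_n) : [&& pi u < n, pi v < n & pi w < n] by rewrite !ltn_ord.
have fAB pi : A pi -> B (f pi).
  by rewrite /A /B !fE tpermL tpermR tpermD //; move: (bounds pi); lia.
have fBA pi : B pi -> A (f pi).
  by rewrite /A /B !fE tpermL tpermR tpermD //; move: (bounds pi); lia.
have AB0 pi : ~~ (A pi && B pi) by apply/negP; rewrite /A /B; lia.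
have AB pi : A pi || B pi = ((pi v : nat) == (pi u).+1).
  by rewrite /A /B; have := perm_val_neq pi vw; have := perm_val_neq pi uw; lia.
rewrite -(card_perm_succ uv) -(card_predU_swap f_inj fAB fBA AB0).
rewrite -(@card_predU_swap _ B A f f_inj fBA fAB) => [|pi]; last by rewrite andbC.
by split; apply: eq_card => pi; rewrite !inE -AB // orbC.
Qed.

End ThreeDistinctPoints.

Lemma card_incr3_adj n (w : 'I_3 -> 'I_n) (x : 'I_4) : injective w ->
  2 * #|[set q : 'S_n | incr3 (fun t => q (w t)) && adj (fun t => q (w t)) x]| = n.-1`!.
Proof.
move=> w_inj; have neq s t : s != t -> w s != w t by rewrite (inj_eq w_inj).
have [w01 w12 w02] : [/\ w i0 != w i1, w i1 != w i2 & w i0 != w i2] by split; apply: neq.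
have [w10 w20 w21] : [/\ w i1 != w i0, w i2 != w i0 & w i2 != w i1] by split; apply: neq.
have n_gt0 : 0 < n := leq_ltn_trans (leq0n _) (ltn_ord (w i0)).
have n_pred : n.-1 < n by rewrite ltn_predL.
have q_neq (q : 'S_n) : [&& (q (w i0) : nat) != q (w i1), (q (w i1) : nat) != q (w i2)
                          & (q (w i0) : nat) != q (w i2)] by rewrite !perm_val_neq.
rewrite /incr3 /adj; case: x => [[|[|[|[|//]]]] x4].
- rewrite -(card_fix_ltn w01 w12 w02 (Ordinal n_gt0)); congr (2 * _).
  apply: eq_card => q; rewrite !inE /= -(inj_eq val_inj) /=.
  by move: (q_neq q); lia.
- rewrite -(card_succ_halves w01 w12 w02).1; congr (2 * _).
  by apply: eq_card => q; rewrite !inE /=; move: (q_neq q); lia.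
- rewrite -(card_succ_halves w12 w20 w10).2; congr (2 * _).
  by apply: eq_card => q; rewrite !inE /=; move: (q_neq q); lia.
- rewrite -(card_fix_ltn w20 w01 w21 (Ordinal n_pred)); congr (2 * _).
  apply: eq_card => q; rewrite !inE /= -(inj_eq val_inj) /= -subn1.
  by move: (q_neq q) (ltn_ord (q (w i1))) (ltn_ord (q (w i2))); lia.
Qed.

(* The t-th value of an occurrence in [0, n) whose value adjacencies are all but
   the y-th: the first y values sit at the bottom, the others at the top. *)
Definition pinned_value (n y t : nat) : nat := if t < y then t else n - 3 + t.

Lemma adjv_pinned n a b c (y : 'I_4) : a < b -> b < c -> c < n ->
  {in [set~ y], forall z : 'I_4, adjv n a b c z} <->
  [/\ a = pinned_value n y 0, b = pinned_value n y 1 & c = pinned_value n y 2].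
Proof.
rewrite /pinned_value => ab bc cn; split=> [adjs | [ea eb ec] z].
- have adj_at k (k4 : k < 4) : k != y -> adjv n a b c k.
    by move=> ky; apply: (adjs (Ordinal k4)); rewrite !inE -(inj_eq val_inj).
  move: (adj_at 0 isT) (adj_at 1 isT) (adj_at 2 isT) (adj_at 3 isT).
  by clear adjs adj_at; case: y => [[|[|[|[|]]]] ?] //=; split; lia.
- rewrite !inE -(inj_eq val_inj) /=.
  by case: y ea eb ec => [[|[|[|[|]]]] ?]; case: z => [[|[|[|[|]]]] ?] //=; lia.
Qed.

Lemma pinned_values n (y : 'I_4) : 3 <= n ->
  exists2 V0 : 'I_3 -> 'I_n, incr3 V0 &
    forall V, incr3 V -> {in [set~ y], forall z, adj V z} <-> V =1 V0.
Proof.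
case: n => [|[|[|m]]] // _.
pose V0 (t : 'I_3) : 'I_m.+3 := inord (pinned_value m.+3 y t).
have V0E t : (V0 t : nat) = pinned_value m.+3 y t.
  by rewrite inordK // /pinned_value; case: ifP; have := ltn_ord t; lia.
exists V0 => [|V /andP[V01 V12]].
  by rewrite /incr3 !V0E /pinned_value; case: (nat_of_ord y) => [|[|[|?]]] /=; lia.
rewrite (adjv_pinned _ V01 V12 (ltn_ord _)).
split=> [[e0 e1 e2] t | VE]; last by split; rewrite VE V0E.
apply: ord_inj; rewrite V0E.
by case: (ord3P t) => [->|[->|->]]; [exact: e0 | exact: e1 | exact: e2].
Qed.

Lemma contains_pinned n (pi : 'S_n) (p : bvpat 3) (x : 'I_4) (V0 : 'I_3 -> 'I_n) :
  bv_X p = [set x] -> incr3 V0 ->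
  (forall V, incr3 V -> {in bv_Y p, forall y, adj V y} <-> V =1 V0) ->
  contains pi p = incr3 (fun t => pi^-1 (V0 (bv_sigma p t)))%g
                  && adj (fun t => pi^-1 (V0 (bv_sigma p t)))%g x.
Proof.
move=> X1 V0_incr V0P.
apply/containsP/andP => [[P [V [P_incr V_incr piPV PX VY]]] | [P_incr Px]].
- have PE t : P t = (pi^-1 (V0 (bv_sigma p t)))%g.
    by rewrite -((V0P V V_incr).1 VY) -piPV permK.
  rewrite /incr3 /adj /= -!PE; split=> //.
  by apply: PX; rewrite X1 set11.
- exists (fun t => pi^-1 (V0 (bv_sigma p t)))%g, V0; split=> //.
  + by move=> t; rewrite permKV.
  + by move=> y; rewrite X1 => /set1P ->.
  + exact: (V0P V0 V0_incr).2.
Qed.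

Lemma card_contains_pinned n (p : bvpat 3) : 3 <= n -> #|bv_X p| = 1 -> #|bv_Y p| = 3 ->
  2 * #|[set pi : 'S_n | contains pi p]| = n.-1`!.
Proof.
move=> n3 /eqP/cards1P[x X1] Y3.
have [y Y1] : exists y, bv_Y p = [set~ y].
  have /eqP/cards1P[y /(congr1 (@setC _))] : #|~: bv_Y p| = 1.
    by have := cardsC (bv_Y p); rewrite Y3 card_ord; lia.
  by rewrite setCK; exists y.
have [V0 V0_incr V0P] := pinned_values y n3.
have w_inj : injective (fun t => V0 (bv_sigma p t)).
  by move=> s t /(incr3_inj V0_incr) /perm_inj.
rewrite -(card_incr3_adj x w_inj) -[in RHS](card_preimset _ (@invg_inj 'S_n)).
congr (2 * _); apply: eq_card => pi; rewrite !inE (contains_pinned _ X1 V0_incr) //.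
by rewrite Y1.
Qed.

Lemma card_s3 l : uniq l -> all (fun k => k < 4) l -> #|s3 l| = size l.
Proof.
move=> l_uniq l_small.
have /card_uniqP : uniq (pmap insub l : seq 'I_4) by exact: pmap_sub_uniq.
move: l_small; rewrite all_count size_pmap_sub => /eqP -> <-.
by apply: eq_card => k; rewrite inE mem_pmap_sub.
Qed.

Lemma listed_cards p : listed p ->
  #|bv_X p| = 1 /\ #|bv_Y p| = 3 \/ #|bv_X p| = 3 /\ #|bv_Y p| = 1.
Proof.
move=> [i i_lt ->].
by do 24 (case: i i_lt => [_|i i_lt]; [rewrite /= !card_s3 //; tauto|]).
Qed.

Lemma avoid_count_from_contains n (p : bvpat 3) :
  2 * #|[set pi : 'S_n | contains pi p]| = n.-1`! ->
  ((avoid_count n p)%:R = n`!%:R - n.-1`!%:R / 2 :> rat)%R.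
Proof.
move=> card_contains.
have <- : avoid_count n p + #|[set pi : 'S_n | contains pi p]| = n`!.
  rewrite -card_Sn -(cardsC [set pi : 'S_n | contains pi p]) addnC.
  by congr (_ + _); apply: eq_card => pi; rewrite !inE.
by rewrite -card_contains natrD natrM mulrAC mulfV ?mul1r ?addrK.
Qed.

Theorem mainTheorem18 (p0 p : bvpat 3) (n : nat) :
  listed p0 -> sym_class p0 p -> 3 <= n ->
  ((avoid_count n p)%:R = (n`!)%:R - ((n.-1)`!)%:R / 2 :> rat)%R.
Proof.
move=> /listed_cards p0_cards /(avoid_count_sym_class n) -> n3.
case: p0_cards => [[X1 Y3] | [X3 Y1]].
- by apply: avoid_count_from_contains; apply: card_contains_pinned.
- rewrite -avoid_count_inv; apply: avoid_count_from_contains.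
  exact: card_contains_pinned.
Qed.
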